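(* Let $S_n(x)=(18n+24)\sin(x)-(9n+27)\sin((n+1)x)+9n\sin((n+2)x)+2\sin(4x)-\sin(5x)$. For every integer $n\geq 21$ and every $x\in\bigl(2.5/(n+2),\,2\pi/3\bigr)$ one has $S_n(x)>0$. *)

From Stdlib Require Import Reals Lra Lia.
Open Scope R_scope.

Definition S_n (n : nat) (x : R) : R :=
  (18 * INR n + 24) * sin x
  - (9 * INR n + 27) * sin ((INR n + 1) * x)
  + 9 * INR n * sin ((INR n + 2) * x)
  + 2 * sin (4 * x) - sin (5 * x).

From Stdlib Require Import Reals Lra Lia.
Open Scope R_scope.

(* Write N for n viewed as a real and c = cos x.  Using sin((n+2)x) = sin((n+1)x) cos x + cos((n+1)x) sin x
   and the Chebyshev expansions of sin 4x and sin 5x,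
     S_n(x) = sin x * amp(N,c) + (9N sin x cos((n+1)x) - (9N(1-c)+27) sin((n+1)x)),
   where amp(N,c) = 18N + 27 - 4((1-c)(1+2c))^2.  The bracket is a sinusoid in (n+1)x of
   squared amplitude (162N^2 + 486N)(1-c) + 729, so S_n(x) > 0 as soon as
   (1 - c^2) amp(N,c)^2 exceeds it; this polynomial inequality holds as long as c stays
   3.1/(N+2)^2 below 1 and 0.85/N^2 above -1/2, i.e. for x in [2.5/(n+2), 2pi/3 - 1/N^2].

   On the remaining window x = 2pi/3 - t with 0 < t <= 1/N^2, every sine in S_n is a sine
   of (multiple of 2pi/3) minus a small angle; the multiple depends on n mod 3.  In each
   of the three residue classes, Taylor bounds of low order on the small angles show the
   sqrt(3)/2 * cos-part dominates. *)

Lemma PI_gt_3 : 3 < PI.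
Proof. generalize PI2_3_2; lra. Qed.

Lemma sin_lb_expand (y : R) : sin_lb y = y - y^3/6 + y^5/120 - y^7/5040.
Proof.
  unfold sin_lb, sin_approx, sin_term; cbv [sum_f_R0].
  rewrite !INR_IZR_INZ; cbn -[IZR]. field.
Qed.

Lemma sin_le_id (y : R) : 0 <= y -> sin y <= y.
Proof.
  intros Hy; destruct (Req_dec y 0) as [->|Hy0].
  - rewrite sin_0; lra.
  - left; apply sin_lt_x; lra.
Qed.

Lemma sin_ge_cubic (y : R) : 0 <= y <= 2 -> y - y^3/6 <= sin y.
Proof.
  intros Hy. destruct (SIN y) as [Hlb _]; try (generalize PI_gt_3; lra).
  rewrite sin_lb_expand in Hlb.
  assert (0 <= y^5) by (apply pow_le; lra).
  assert (y^7 = y^5 * (y*y)) by ring.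
  assert (y*y <= 4) by nra.
  nra.
Qed.

Lemma sin_nonneg_small (y : R) : 0 <= y <= 2 -> 0 <= sin y.
Proof. intros Hy; generalize (sin_ge_cubic y Hy); nra. Qed.

(* Cosine bounds are derived from the sine bounds through the half-angle formula. *)
Lemma cos_half_angle (y : R) : cos y = 1 - 2 * sin (y/2) * sin (y/2).
Proof. rewrite <- cos_2a_sin; f_equal; field. Qed.

Lemma cos_ge_quadratic (y : R) : 0 <= y <= 2 -> 1 - y^2/2 <= cos y.
Proof.
  intros Hy; rewrite cos_half_angle.
  generalize (sin_le_id (y/2)) (sin_nonneg_small (y/2)); intros; nra.
Qed.

Lemma cos_le_quartic (y : R) : 0 <= y <= 2 -> cos y <= 1 - y^2/2 + y^4/24.
Proof.
  intros Hy; rewrite cos_half_angle.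
  pose proof (sin_ge_cubic (y/2) ltac:(lra)) as Hs.
  set (L := y/2 - (y/2)^3/6) in *.
  assert (0 <= L) by (unfold L; nra).
  assert (L*L <= sin (y/2) * sin (y/2)) by (apply Rmult_le_compat; lra).
  assert (2*(L*L) = y^2/2 - y^4/24 + y^6/1152) by (unfold L; field).
  assert (0 <= y^6) by (apply pow_le; lra).
  lra.
Qed.

Lemma cos_ge_half (y : R) : 0 <= y <= 1 -> 1/2 <= cos y.
Proof. intros Hy; generalize (cos_ge_quadratic y ltac:(lra)); nra. Qed.

(* sin(2pi/3) = sqrt 3 / 2, and a rational lower bound for it. *)
Definition sqrt3_half : R := sqrt 3 / 2.

Lemma sqrt3_half_sq : sqrt3_half * sqrt3_half = 3/4.
Proof. unfold sqrt3_half; generalize (sqrt_sqrt 3 ltac:(lra)); nra. Qed.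

Lemma sqrt3_half_gt : 86/100 < sqrt3_half.
Proof.
  assert (0 <= sqrt3_half) by (unfold sqrt3_half; generalize (sqrt_pos 3); lra).
  generalize sqrt3_half_sq; nra.
Qed.

(* sin_third_turn r y = sin(r * 2pi/3 - y) for r = 0, 1, 2, expanded. *)
Definition sin_third_turn (r : nat) (y : R) : R :=
  match r with
  | O => - sin y
  | 1%nat => sqrt3_half * cos y + sin y / 2
  | _ => - sqrt3_half * cos y + sin y / 2
  end.

Lemma sin_third_turn_spec (j : nat) (y : R) :
  sin (INR j * (2*PI/3 - y)) = sin_third_turn (j mod 3) (INR j * y).
Proof.
  rewrite Rmult_minus_distr_l. generalize (INR j * y); intros z.
  assert (Hj : INR j * (2*PI/3) - z
             = (INR (j mod 3) * (2*PI/3) - z) + 2 * INR (j / 3) * PI).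
  { rewrite (Nat.div_mod_eq j 3) at 1. rewrite plus_INR, mult_INR. simpl; field. }
  rewrite Hj, sin_period.
  assert (Hr : (j mod 3 < 3)%nat) by (apply Nat.mod_upper_bound; lia).
  destruct (j mod 3) as [|[|[|r]]]; simpl; try lia.
  - rewrite Rmult_0_l, Rminus_0_l, sin_neg. reflexivity.
  - rewrite Rmult_1_l, sin_minus.
    replace (2*PI/3) with (PI - PI/3) by field.
    rewrite sin_minus, cos_minus, sin_PI, cos_PI, sin_PI3, cos_PI3.
    unfold sqrt3_half; lra.
  - replace ((1+1) * (2*PI/3)) with (PI + PI/3) by field.
    rewrite sin_minus, sin_plus, cos_plus, sin_PI, cos_PI, sin_PI3, cos_PI3.
    unfold sqrt3_half; lra.
Qed.

Lemma sin_4x (x : R) : sin (4*x) = sin x * (8*cos x^3 - 4*cos x).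
Proof. replace (4*x) with (2*(2*x)) by ring. rewrite !sin_2a, cos_2a_cos. ring. Qed.

Lemma sin_5x (x : R) : sin (5*x) = sin x * (16*cos x^4 - 12*cos x^2 + 1).
Proof.
  replace (5*x) with (2*(2*x) + x) by ring.
  rewrite sin_plus, !sin_2a, !cos_2a_cos. ring.
Qed.

Lemma sinusoid_sq_le (A B co si : R) :
  co*co + si*si = 1 -> (B*co - A*si)^2 <= A^2 + B^2.
Proof.
  intros Hcs.
  assert (E : (B*co - A*si)^2 + (B*si + A*co)^2 = (A^2 + B^2) * (co*co + si*si)) by ring.
  rewrite Hcs in E. generalize (pow2_ge_0 (B*si + A*co)); lra.
Qed.

Lemma sum_pos_of_sq_lt (p q : R) : 0 < p -> q^2 < p^2 -> 0 < p + q.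
Proof. intros Hp Hq; nra. Qed.

(* The coefficient of sin x once S_n is written as sin x times amp plus a sinusoid in (n+1)x. *)
Definition amp (N c : R) : R := 18*N + 27 - 4*((1-c)*(1+2*c))^2.

Lemma S_n_phase_form (n : nat) (x : R) :
  S_n n x = sin x * amp (INR n) (cos x)
    + (9*INR n*sin x * cos ((INR n + 1)*x)
       - (9*INR n*(1 - cos x) + 27) * sin ((INR n + 1)*x)).
Proof.
  unfold S_n, amp. rewrite sin_4x, sin_5x.
  replace ((INR n + 2)*x) with ((INR n + 1)*x + x) by ring.
  rewrite sin_plus. ring.
Qed.

(* (1-c)(1+2c) lies in [0, 9/8] for c in [-1/2, 1], so amp is positive. *)
Lemma amp_pos (N c : R) : 0 <= N -> -1/2 <= c <= 1 -> 0 < amp N c.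
Proof.
  intros HN Hc; unfold amp.
  set (p := (1-c)*(1+2*c)).
  assert (0 <= p) by (unfold p; apply Rmult_le_pos; lra).
  assert (p <= 9/8) by (generalize (pow2_ge_0 (c - 1/4)); unfold p; nra).
  nra.
Qed.

(* The value of amp^2/2 - 27/4 (18N+27) at the largest possible p = (1-c)(1+2c) = 9/8;
   it bounds from below the coefficient of p in (1-c^2) amp^2 minus the squared amplitude
   of the sinusoid (see amp_sq_reduction), and it is of order N^2. *)
Definition amp_floor (N : R) : R :=
  (18*N + 27 - 81/16)^2/2 - 27/4*(18*N + 27).

Lemma amp_floor_bounds (N : R) : 21 <= N ->
  941/10 * (N+2)^2 <= amp_floor N /\ 92 * N^2 <= amp_floor N.
Proof. intros HN; unfold amp_floor; split; nra. Qed.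

Lemma amp_sq_reduction (N c : R) : 21 <= N -> -1/2 <= c <= 1 ->
  let v := 1 - c in let p := v*(3 - 2*v) in
  p * amp_floor N + 729/2*v - 729
    <= (1 - c^2) * amp N c ^2 - ((162*N^2 + 486*N)*(1-c) + 729).
Proof.
  intros HN Hc v p.
  set (m0 := 18*N + 27).
  assert (Hv : 0 <= v <= 3/2) by (unfold v; lra).
  assert (Hp0 : 0 <= p) by (unfold p; apply Rmult_le_pos; lra).
  assert (Hp1 : p <= 9/8) by (generalize (pow2_ge_0 (v - 3/4)); unfold p; nra).
  assert (Hamp : amp N c = m0 - 4*(p*p)) by (unfold amp, m0, p, v; ring).
  assert (Hsq : (m0 - 81/16)^2 <= (m0 - 4*(p*p))^2).
  { assert (p*p <= 9/8*(9/8)) by (apply Rmult_le_compat; lra).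
    apply pow_incr; unfold m0; lra. }
  assert (Hpv : p*v <= 9/8*(3/2)) by (apply Rmult_le_compat; lra).
  assert (E : (1 - c^2) * amp N c ^2 - ((162*N^2 + 486*N)*(1-c) + 729)
              - (p * amp_floor N + 729/2*v - 729)
            = p/2 * ((m0 - 4*(p*p))^2 - (m0 - 81/16)^2)
              + p*m0*(27/4 - 4*(p*v)) + 8*(p*p)*(p*p)*v)
    by (rewrite Hamp; unfold amp_floor, m0, p, v; field).
  assert (0 <= p/2 * ((m0 - 4*(p*p))^2 - (m0 - 81/16)^2))
    by (apply Rmult_le_pos; lra).
  assert (0 <= p*m0*(27/4 - 4*(p*v)))
    by (apply Rmult_le_pos; [apply Rmult_le_pos; unfold m0|]; lra).
  assert (0 <= 8*(p*p)*(p*p)*v)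
    by (apply Rmult_le_pos; [|lra]; generalize (Rle_0_sqr p); unfold Rsqr; nra).
  lra.
Qed.

Lemma amp_floor_dominates (N v D : R) : 21 <= N -> 0 <= v <= 3/2 ->
  31/10 <= v * (N+2)^2 -> 85/100 <= (3/2 - v) * N^2 ->
  941/10 * (N+2)^2 <= D -> 92 * N^2 <= D ->
  729 < v*(3 - 2*v) * D + 729/2*v.
Proof.
  intros HN Hv Hleft Hright HD1 HD2.
  assert (HD0 : 92*441 <= D) by nra.
  destruct (Rle_lt_dec v (1/4)) as [Hsmall|Hmid].
  - assert (5/2*v <= v*(3 - 2*v)) by nra.
    assert (5/2*v*D <= v*(3 - 2*v)*D) by (apply Rmult_le_compat_r; lra).
    nra.
  - destruct (Rle_lt_dec v (14/10)) as [Hmid'|Hlarge].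
    + assert (28/100 <= v*(3 - 2*v)) by nra.
      assert (28/100*D <= v*(3 - 2*v)*D) by (apply Rmult_le_compat_r; lra).
      lra.
    + assert (28/10*(3/2 - v) <= v*(3 - 2*v)) by nra.
      assert (28/10*(3/2 - v)*D <= v*(3 - 2*v)*D) by (apply Rmult_le_compat_r; lra).
      nra.
Qed.

Lemma amp_sq_dominates (N c : R) : 21 <= N -> -1/2 <= c <= 1 ->
  31/10 <= (1 - c) * (N+2)^2 -> 85/100 <= (c + 1/2) * N^2 ->
  (162*N^2 + 486*N)*(1-c) + 729 < (1 - c^2) * amp N c ^2.
Proof.
  intros HN Hc Hleft Hright.
  destruct (amp_floor_bounds N HN) as [HD1 HD2].
  generalize (amp_sq_reduction N c HN Hc); cbv zeta; intros Hred.
  assert (729 < (1-c)*(3 - 2*(1-c)) * amp_floor N + 729/2*(1-c)).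
  { apply (amp_floor_dominates N); lra. }
  lra.
Qed.

Lemma one_minus_cos_ge (y x : R) : 0 <= y <= 1/9 -> y <= x <= PI ->
  496/1000 * y^2 <= 1 - cos x.
Proof.
  intros Hy Hx. generalize PI_gt_3; intros HPI.
  assert (cos x <= cos y) by (apply cos_decr_1; lra).
  generalize (cos_le_quartic y ltac:(lra)); intros Hq.
  assert (0 <= y^2 <= 1/81) by nra.
  assert (y^4 <= y^2/81) by (replace (y^4) with (y^2*y^2) by ring; nra).
  lra.
Qed.

Lemma cos_plus_half_ge (d x : R) : 0 <= d <= 1/10 -> 0 <= x <= 2*PI/3 - d ->
  85/100 * d <= cos x + 1/2.
Proof.
  intros Hd Hx. generalize PI_gt_3; intros HPI.
  assert (Hmono : cos (2*PI/3 - d) <= cos x) by (apply cos_decr_1; lra).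
  assert (E : cos (2*PI/3 - d) = - cos d / 2 + sqrt3_half * sin d).
  { replace (2*PI/3 - d) with (PI - (PI/3 + d)) by field.
    rewrite cos_minus, sin_PI, cos_PI, cos_plus, sin_PI3, cos_PI3.
    unfold sqrt3_half; lra. }
  generalize (COS_bound d) (sin_ge_cubic d ltac:(lra)) sqrt3_half_gt; intros Hcb Hs Hr.
  assert (0 <= d - d^3/6) by nra.
  assert (86/100 * (d - d^3/6) <= sqrt3_half * sin d) by (apply Rmult_le_compat; lra).
  nra.
Qed.

Lemma S_n_pos_far (n : nat) (x : R) : 21 <= INR n ->
  5/2/(INR n + 2) <= x -> x <= 2*PI/3 - 1/(INR n)^2 -> S_n n x > 0.
Proof.
  intros HN Hlo Hhi. rewrite S_n_phase_form.
  set (N := INR n) in *. set (c := cos x).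
  set (y := 5/2/(N+2)) in *. set (d := 1/N^2) in *.
  generalize PI_gt_3; intros HPI.
  assert (Ey : y * (N+2) = 5/2) by (unfold y; field; lra).
  assert (Ed : d * N^2 = 1) by (unfold d; field; lra).
  assert (Hy : 0 < y <= 1/9) by (split; nra).
  assert (Hd : 0 <= d <= 1/10) by (split; nra).
  assert (Hleft : 31/10 <= (1 - c) * (N+2)^2).
  { generalize (one_minus_cos_ge y x ltac:(lra) ltac:(lra)); intros H.
    replace (31/10) with (496/1000 * y^2 * (N+2)^2) by nra.
    apply Rmult_le_compat_r; [nra|exact H]. }
  assert (Hright : 85/100 <= (c + 1/2) * N^2).
  { generalize (cos_plus_half_ge d x Hd ltac:(lra)); intros H.
    replace (85/100) with (85/100 * d * N^2) by nra.
    apply Rmult_le_compat_r; [nra|exact H]. }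
  assert (Hc : -1/2 <= c <= 1).
  { split; [|unfold c; generalize (COS_bound x); lra].
    destruct (Rle_lt_dec (c + 1/2) 0) as [Hneg|]; [|lra].
    assert (0 <= - (c + 1/2) * N^2) by (apply Rmult_le_pos; nra). lra. }
  assert (Hs : 0 < sin x) by (apply sin_gt_0; lra).
  assert (Hsc : sin x ^2 = 1 - c^2) by (unfold c; generalize (sin2_cos2 x); unfold Rsqr; lra).
  apply sum_pos_of_sq_lt.
  - apply Rmult_lt_0_compat; [exact Hs|apply amp_pos; lra].
  - eapply Rle_lt_trans.
    + apply sinusoid_sq_le. generalize (sin2_cos2 ((N + 1)*x)); unfold Rsqr; lra.
    + replace ((9*N*(1-c) + 27)^2 + (9*N*sin x)^2)
        with ((162*N^2 + 486*N)*(1-c) + 729) by (rewrite Rpow_mult_distr, Hsc; ring).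
      rewrite Rpow_mult_distr, Hsc. apply amp_sq_dominates; lra.
Qed.

Lemma S_n_near_two_thirds (n : nat) (t : R) :
  S_n n (2*PI/3 - t) =
    (18*INR n + 24) * sin_third_turn 1 t
    - (9*INR n + 27) * sin_third_turn ((n+1) mod 3) ((INR n + 1)*t)
    + 9*INR n * sin_third_turn ((n+2) mod 3) ((INR n + 2)*t)
    + 2 * sin_third_turn 1 (4*t) - sin_third_turn 2 (5*t).
Proof.
  generalize (sin_third_turn_spec 1 t) (sin_third_turn_spec 4 t)
    (sin_third_turn_spec 5 t) (sin_third_turn_spec (n+1) t)
    (sin_third_turn_spec (n+2) t).
  rewrite !plus_INR.
  replace (INR 1) with 1 by reflexivity.
  replace (INR 2) with 2 by reflexivity.
  replace (INR 4) with 4 by (simpl; ring).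
  replace (INR 5) with 5 by (simpl; ring).
  change (1 mod 3)%nat with 1%nat; change (4 mod 3)%nat with 1%nat;
    change (5 mod 3)%nat with 2%nat.
  rewrite !Rmult_1_l. intros E1 E4 E5 En1 En2.
  unfold S_n. rewrite E1, E4, E5, En1, En2. reflexivity.
Qed.

Lemma quartic_coeff_le (N : R) : 21 <= N ->
  ((9*N+27)*(N+1)^4 + 9*N*(N+2)^4)/24 <= 2*N^5.
Proof.
  intros HN. assert (Hu : 0 <= N - 21) by lra.
  set (u := N - 21) in *. replace N with (u + 21) by (unfold u; ring).
  assert (0 <= u^2) by nra. assert (0 <= u^3) by (apply pow_le; lra).
  assert (0 <= u^4) by (apply pow_le; lra). assert (0 <= u^5) by (apply pow_le; lra).
  lra.
Qed.

Lemma cubic_coeff_le (N : R) : 21 <= N ->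
  (18*N + 24 + 9*N*(N+2)^3 + 128)/6 <= 3*N^4.
Proof.
  intros HN. assert (Hu : 0 <= N - 21) by lra.
  set (u := N - 21) in *. replace N with (u + 21) by (unfold u; ring).
  assert (0 <= u^2) by nra. assert (0 <= u^3) by (apply pow_le; lra).
  assert (0 <= u^4) by (apply pow_le; lra).
  lra.
Qed.

(* Near 2pi/3: x = 2pi/3 - t with t N^2 <= 1, so every angle (N+2)t is at most 1. *)
Section NearTwoThirds.

Variables N t : R.
Hypothesis HN : 21 <= N.
Hypothesis Ht : 0 < t.
Hypothesis HtN : t * N^2 <= 1.

Lemma mul_t_le (q c : R) : 0 <= c -> q <= c * N^2 -> q * t <= c.
Proof. intros Hc Hq. assert (q * t <= c * N^2 * t) by (apply Rmult_le_compat_r; lra). nra. Qed.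

Lemma arg_small (k : R) : 0 <= k <= N + 2 -> 0 <= k * t <= 1.
Proof. intros Hk. split; [apply Rmult_le_pos; lra|apply mul_t_le; nra]. Qed.

(* Residue 0: the cosine part is of order N^3 t^2, from second-order Taylor bounds... *)
Lemma residue0_cos_part :
  8*N^3*t^2 <= (18*N+24)*cos t - (9*N+27)*cos ((N+1)*t) - 9*N*cos ((N+2)*t)
               + 2*cos (4*t) + cos (5*t).
Proof.
  set (a := (N+1)*t). set (b := (N+2)*t).
  pose proof (arg_small 1 ltac:(lra)) as H1. pose proof (arg_small 4 ltac:(lra)) as H4.
  pose proof (arg_small 5 ltac:(lra)) as H5.
  pose proof (arg_small (N+1) ltac:(lra)) as Ha. pose proof (arg_small (N+2) ltac:(lra)) as Hb.
  rewrite Rmult_1_l in H1. fold a in Ha. fold b in Hb.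
  pose proof (Rmult_le_compat_l (18*N+24) _ _ ltac:(lra) (cos_ge_quadratic t ltac:(lra))).
  pose proof (Rmult_le_compat_l (9*N+27) _ _ ltac:(lra) (cos_le_quartic a ltac:(lra))).
  pose proof (Rmult_le_compat_l (9*N) _ _ ltac:(lra) (cos_le_quartic b ltac:(lra))).
  pose proof (cos_ge_quadratic (4*t) ltac:(lra)). pose proof (cos_ge_quadratic (5*t) ltac:(lra)).
  set (beta := ((9*N+27)*(N+1)^4 + 9*N*(N+2)^4)/24).
  assert (E : (18*N+24)*(1 - t^2/2) - (9*N+27)*(1 - a^2/2 + a^4/24)
              - 9*N*(1 - b^2/2 + b^4/24) + 2*(1 - (4*t)^2/2) + (1 - (5*t)^2/2)
            = t^2 * ((18*N^3 + 81*N^2 + 81*N - 54)/2) - t^4 * beta)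
    by (unfold a, b, beta; field).
  assert (Hbeta : t^4 * beta <= 2*N*t^2).
  { assert (t^4 * beta <= t^4 * (2*N^5))
      by (apply Rmult_le_compat_l; [apply pow_le; lra|apply quartic_coeff_le; lra]).
    assert (Hw : (t*N^2)^2 <= 1) by (assert (0 <= t*N^2) by nra; nra).
    assert (2*N*t^2*(t*N^2)^2 <= 2*N*t^2*1)
      by (apply Rmult_le_compat_l; [apply Rmult_le_pos; nra|exact Hw]).
    replace (t^4 * (2*N^5)) with (2*N*t^2*(t*N^2)^2) in * by ring.
    lra. }
  nra.
Qed.

(* ...while the sine part (whose first-order terms cancel) is at least -3 N^2 t^2. *)
Lemma residue0_sin_part :
  -(3*N^2*t^2) <= (18*N+24)*sin t - (9*N+27)*sin ((N+1)*t) + 9*N*sin ((N+2)*t)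
                  + 2*sin (4*t) - sin (5*t).
Proof.
  set (a := (N+1)*t). set (b := (N+2)*t).
  pose proof (arg_small 1 ltac:(lra)) as H1. pose proof (arg_small 4 ltac:(lra)) as H4.
  pose proof (arg_small 5 ltac:(lra)) as H5.
  pose proof (arg_small (N+1) ltac:(lra)) as Ha. pose proof (arg_small (N+2) ltac:(lra)) as Hb.
  rewrite Rmult_1_l in H1. fold a in Ha. fold b in Hb.
  pose proof (Rmult_le_compat_l (18*N+24) _ _ ltac:(lra) (sin_ge_cubic t ltac:(lra))).
  pose proof (Rmult_le_compat_l (9*N+27) _ _ ltac:(lra) (sin_le_id a ltac:(lra))).
  pose proof (Rmult_le_compat_l (9*N) _ _ ltac:(lra) (sin_ge_cubic b ltac:(lra))).
  pose proof (sin_ge_cubic (4*t) ltac:(lra)). pose proof (sin_le_id (5*t) ltac:(lra)).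
  set (gamma := (18*N + 24 + 9*N*(N+2)^3 + 128)/6).
  assert (E : (18*N+24)*(t - t^3/6) - (9*N+27)*a + 9*N*(b - b^3/6)
              + 2*(4*t - (4*t)^3/6) - 5*t = - (t^3 * gamma))
    by (unfold a, b, gamma; field).
  assert (Hgamma : t^3 * gamma <= 3*N^2*t^2).
  { assert (t^3 * gamma <= t^3 * (3*N^4))
      by (apply Rmult_le_compat_l; [apply pow_le; lra|apply cubic_coeff_le; lra]).
    assert (3*N^2*t^2*(t*N^2) <= 3*N^2*t^2*1)
      by (apply Rmult_le_compat_l; [apply Rmult_le_pos; nra|exact HtN]).
    replace (t^3 * (3*N^4)) with (3*N^2*t^2*(t*N^2)) in * by ring.
    lra. }
  lra.
Qed.

Lemma residue0_pos :
  0 < (18*N+24) * sin_third_turn 1 t - (9*N+27) * sin_third_turn 1 ((N+1)*t)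
      + 9*N * sin_third_turn 2 ((N+2)*t) + 2 * sin_third_turn 1 (4*t)
      - sin_third_turn 2 (5*t).
Proof.
  pose proof residue0_cos_part as Hc. pose proof residue0_sin_part as Hs.
  pose proof sqrt3_half_gt as Hr.
  simpl sin_third_turn.
  set (C := (18*N+24)*cos t - (9*N+27)*cos ((N+1)*t) - 9*N*cos ((N+2)*t)
            + 2*cos (4*t) + cos (5*t)) in *.
  set (S := (18*N+24)*sin t - (9*N+27)*sin ((N+1)*t) + 9*N*sin ((N+2)*t)
            + 2*sin (4*t) - sin (5*t)) in *.
  assert (HsC : 86/100 * (8*N^3*t^2) <= sqrt3_half * C)
    by (apply Rmult_le_compat; try lra; apply Rmult_le_pos; nra).
  assert (0 < N^2*t^2) by (apply Rmult_lt_0_compat; nra).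
  assert (3/2*(N^2*t^2) < 86/100 * (8*N^3*t^2)) by nra.
  unfold C, S in *. lra.
Qed.

(* Residues 1 and 2: the cosine part is of order N and the remaining terms are O(1). *)
Lemma residue1_pos :
  0 < (18*N+24) * sin_third_turn 1 t - (9*N+27) * sin_third_turn 2 ((N+1)*t)
      + 9*N * sin_third_turn 0 ((N+2)*t) + 2 * sin_third_turn 1 (4*t)
      - sin_third_turn 2 (5*t).
Proof.
  pose proof (arg_small 1 ltac:(lra)) as H1. pose proof (arg_small 4 ltac:(lra)) as H4.
  pose proof (arg_small 5 ltac:(lra)) as H5.
  pose proof (arg_small (N+1) ltac:(lra)) as Ha. pose proof (arg_small (N+2) ltac:(lra)) as Hb.
  rewrite Rmult_1_l in H1.
  simpl sin_third_turn.
  set (X := (18*N+24)*cos t + (9*N+27)*cos ((N+1)*t) + 2*cos (4*t) + cos (5*t)).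
  assert (HX : (27*N+54)/2 <= X).
  { pose proof (Rmult_le_compat_l (18*N+24) _ _ ltac:(lra) (cos_ge_half t H1)).
    pose proof (Rmult_le_compat_l (9*N+27) _ _ ltac:(lra) (cos_ge_half _ Ha)).
    pose proof (cos_ge_half _ H4). pose proof (cos_ge_half _ H5).
    unfold X; lra. }
  assert (86/100 * ((27*N+54)/2) <= sqrt3_half * X)
    by (apply Rmult_le_compat; generalize sqrt3_half_gt; lra).
  pose proof (Rmult_le_pos (18*N+24) _ ltac:(lra) (sin_nonneg_small t ltac:(lra))).
  pose proof (sin_nonneg_small (4*t) ltac:(lra)).
  pose proof (Rmult_le_compat_l (9*N+27) _ _ ltac:(lra) (sin_le_id ((N+1)*t) ltac:(lra))).
  pose proof (Rmult_le_compat_l (9*N) _ _ ltac:(lra) (sin_le_id ((N+2)*t) ltac:(lra))).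
  pose proof (sin_le_id (5*t) ltac:(lra)).
  assert ((9*N+27)*((N+1)*t) <= 12)
    by (rewrite <- Rmult_assoc; apply mul_t_le; nra).
  assert (9*N*((N+2)*t) <= 10)
    by (rewrite <- Rmult_assoc; apply mul_t_le; nra).
  unfold X in *. lra.
Qed.

Lemma residue2_pos :
  0 < (18*N+24) * sin_third_turn 1 t - (9*N+27) * sin_third_turn 0 ((N+1)*t)
      + 9*N * sin_third_turn 1 ((N+2)*t) + 2 * sin_third_turn 1 (4*t)
      - sin_third_turn 2 (5*t).
Proof.
  pose proof (arg_small 1 ltac:(lra)) as H1. pose proof (arg_small 4 ltac:(lra)) as H4.
  pose proof (arg_small 5 ltac:(lra)) as H5.
  pose proof (arg_small (N+1) ltac:(lra)) as Ha. pose proof (arg_small (N+2) ltac:(lra)) as Hb.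
  rewrite Rmult_1_l in H1.
  simpl sin_third_turn.
  set (X := (18*N+24)*cos t + 9*N*cos ((N+2)*t) + 2*cos (4*t) + cos (5*t)).
  assert (HX : (27*N+27)/2 <= X).
  { pose proof (Rmult_le_compat_l (18*N+24) _ _ ltac:(lra) (cos_ge_half t H1)).
    pose proof (Rmult_le_compat_l (9*N) _ _ ltac:(lra) (cos_ge_half _ Hb)).
    pose proof (cos_ge_half _ H4). pose proof (cos_ge_half _ H5).
    unfold X; lra. }
  assert (86/100 * ((27*N+27)/2) <= sqrt3_half * X)
    by (apply Rmult_le_compat; generalize sqrt3_half_gt; lra).
  pose proof (Rmult_le_pos (18*N+24) _ ltac:(lra) (sin_nonneg_small t ltac:(lra))).
  pose proof (Rmult_le_pos (9*N+27) _ ltac:(lra) (sin_nonneg_small ((N+1)*t) ltac:(lra))).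
  pose proof (Rmult_le_pos (9*N) _ ltac:(lra) (sin_nonneg_small ((N+2)*t) ltac:(lra))).
  pose proof (sin_nonneg_small (4*t) ltac:(lra)).
  pose proof (sin_le_id (5*t) ltac:(lra)).
  unfold X in *. lra.
Qed.

End NearTwoThirds.

Lemma S_n_pos_near (n : nat) (x : R) : 21 <= INR n ->
  2*PI/3 - 1/(INR n)^2 < x -> x < 2*PI/3 -> S_n n x > 0.
Proof.
  intros HN Hlo Hhi.
  replace x with (2*PI/3 - (2*PI/3 - x)) by ring.
  set (t := 2*PI/3 - x).
  assert (Ht : 0 < t) by (unfold t; lra).
  assert (HtN : t * INR n ^2 <= 1).
  { assert (E : 1/INR n ^2 * INR n ^2 = 1) by (field; lra).
    assert (t * INR n ^2 <= 1/INR n ^2 * INR n ^2)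
      by (apply Rmult_le_compat_r; [nra|unfold t; lra]).
    lra. }
  rewrite S_n_near_two_thirds.
  rewrite <- (Nat.Div0.add_mod_idemp_l n 1), <- (Nat.Div0.add_mod_idemp_l n 2).
  assert (Hr : (n mod 3 < 3)%nat) by (apply Nat.mod_upper_bound; lia).
  destruct (n mod 3) as [|[|[|r]]]; try lia; cbn [Nat.add Nat.modulo].
  - apply residue0_pos; lra.
  - apply residue1_pos; lra.
  - apply residue2_pos; lra.
Qed.

Theorem mainTheorem15 (n : nat) (x : R) :
  (21 <= n)%nat ->
  (5 / 2) / (INR n + 2) < x -> x < 2 * PI / 3 ->
  S_n n x > 0.
Proof.
  intros Hn Hlo Hhi.
  assert (HN : 21 <= INR n) by (replace 21 with (INR 21) by (simpl; ring); apply le_INR; lia).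
  destruct (Rle_lt_dec x (2*PI/3 - 1/(INR n)^2)) as [Hleft|Hright].
  - apply S_n_pos_far; lra.
  - apply S_n_pos_near; lra.
Qed.
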